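(* Let $n\ge1$, $\lambda,R>0$ and $\alpha>1$. Let $\phi:[0,R]\to\mathbb{R}$ be a nonnegative solution of $$r^{1-n}(r^{n-1}\phi')'=\lambda\phi^\alpha\ \text{ in }(0,R),\qquad \phi(0)=1,\qquad\phi'(0)=0.$$ Then $\phi'>0$ in $(0,R)$ and, for every $k=1,2,\dots$, there exists $c_{n,k}>0$ depending only on $n$ and $k$ such that $\phi(r)\ge c_{n,k}\lambda^kr^{2k}$ for every $r\in(0,R)$. *)

From Stdlib Require Import Reals.
From Coquelicot Require Import Coquelicot.
Open Scope R_scope.

(* Real power x^a for x >= 0 and real a > 0, with the convention 0^a = 0
   (Stdlib's Rpower 0 a = exp (a * ln 0) = 1, which would be wrong). *)
Definition rpow (x a : R) : R := if Rle_dec x 0 then 0 else Rpower x a.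

(* Only the values of phi on [0,R] matter. *)
Definition radial_solution (n : nat) (lam alpha Rr : R) (phi : R -> R) : Prop :=
  (forall r, 0 <= r <= Rr -> 0 <= phi r) /\
  phi 0 = 1 /\
  filterlim (fun h => (phi h - phi 0) / h) (at_right 0) (locally 0) /\
  (forall r, 0 < r < Rr -> ex_derive phi r) /\
  (forall r, 0 < r < Rr ->
     is_derive (fun s => s ^ (n - 1) * Derive phi s) r
               (r ^ (n - 1) * (lam * rpow (phi r) alpha))).

From Stdlib Require Import Reals Lra Lia.
From Coquelicot Require Import Coquelicot.
Open Scope R_scope.

(* With the flux g(s) = s^(n-1) phi'(s), the equation reads g' = lam s^(n-1) phi^alpha >= 0.
   If g(r) < 0 for some r, then phi' <= -c < 0 on (0, r), which contradicts phi'(0) = 0;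
   hence g >= 0, phi is nondecreasing and phi >= 1, so g' > 0 and g, hence phi', is positive.
   The bounds come from integrating twice: phi >= c_k lam^k s^(2k) gives
   g(t) >= c_k lam^(k+1) t^(2k+n) / (2k+n), hence phi'(t) >= c_k lam^(k+1) t^(2k+1) / (2k+n) and
   phi(r) >= 1 + c_(k+1) lam^(k+1) r^(2k+2) with c_(k+1) = c_k / ((2k+n)(2k+2)).
   As the data at 0 are one-sided, each integration from 0 is a right limit at 0 of a function
   that is nondecreasing on (0, R). *)

Lemma filterlim_at_right_plus (f g : R -> R) (x l l' : R) :
  filterlim f (at_right x) (locally l) -> filterlim g (at_right x) (locally l') ->
  filterlim (fun s => f s + g s) (at_right x) (locally (l + l')).
Proof. intros Hf Hg. exact (filterlim_comp_2 f g Rplus Hf Hg (filterlim_plus l l')). Qed.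

Lemma filterlim_at_right_derivable (f : R -> R) (x : R) :
  ex_derive f x -> filterlim f (at_right x) (locally (f x)).
Proof.
  intros Hf. apply (filterlim_filter_le_1 _ (filter_le_within _)).
  exact (ex_derive_continuous f x Hf).
Qed.

Lemma filterlim_at_right_0_of_quotient (f : R -> R) :
  filterlim (fun h => (f h - f 0) / h) (at_right 0) (locally 0) ->
  filterlim f (at_right 0) (locally (f 0)).
Proof.
  intros Hq.
  assert (Hlim : filterlim (fun h => h * ((f h - f 0) / h) + f 0) (at_right 0)
                   (locally (0 * 0 + f 0))).
  { apply filterlim_at_right_plus; [|apply filterlim_const].
    refine (filterlim_comp_2 (fun h => h) _ Rmult _ Hq (filterlim_mult 0 0)).
    apply (filterlim_filter_le_1 _ (filter_le_within _)), filterlim_id. }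
  rewrite Rmult_0_l, Rplus_0_l in Hlim.
  apply (filterlim_ext_loc _ _ (F := at_right 0)) with (2 := Hlim).
  exists (mkposreal 1 Rlt_0_1); intros h _ Hh. field. lra.
Qed.

Lemma filterlim_at_right_0_monomial (C : R) (N : nat) :
  (0 < N)%nat -> filterlim (fun s => C * s ^ N) (at_right 0) (locally 0).
Proof.
  intros HN.
  assert (Hlim := filterlim_at_right_derivable (fun s => C * s ^ N) 0
                   ltac:(auto_derive; exact I)).
  cbv beta in Hlim. rewrite pow_i, Rmult_0_r in Hlim by exact HN. exact Hlim.
Qed.

Lemma is_derive_monomial (C : R) (N : nat) (x : R) :
  is_derive (fun s => C * s ^ N) x (C * INR N * x ^ pred N).
Proof. auto_derive; [exact I|ring]. Qed.

Lemma at_right_lim_le (f : R -> R) (l C h : R) :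
  0 < h -> filterlim f (at_right 0) (locally l) ->
  (forall s, 0 < s < h -> f s <= C) -> l <= C.
Proof.
  intros Hh Hf Hle. apply Rnot_lt_le; intros HCl.
  assert (Hgap : 0 < l - C) by lra.
  assert (Hnear : at_right 0 (fun s => ball l (l - C) (f s))).
  { apply Hf, (locally_ball l (mkposreal _ Hgap)). }
  assert (Hsmall : at_right 0 (fun s => 0 < s < h)).
  { exists (mkposreal h Hh); intros s Hs Hs0.
    change (Rabs (s - 0) < h) in Hs. apply Rabs_def2 in Hs. lra. }
  destruct (filter_ex _ (filter_and _ _ Hnear Hsmall)) as [s [Hfs Hs]].
  change (Rabs (f s - l) < l - C) in Hfs. apply Rabs_def2 in Hfs.
  specialize (Hle s Hs). lra.
Qed.

Lemma is_derive_nonneg_le (F dF : R -> R) (a b : R) :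
  a <= b -> (forall x, a <= x <= b -> is_derive F x (dF x)) ->
  (forall x, a < x < b -> 0 <= dF x) -> F a <= F b.
Proof.
  intros Hab HD Hpos. destruct (Req_dec a b) as [<-|Hne]; [lra|].
  destruct (MVT_cor2 F dF a b) as [c [Hmvt Hc]]; [lra| |].
  - intros c Hc. apply is_derive_Reals, HD, Hc.
  - specialize (Hpos c Hc). nra.
Qed.

Lemma at_right_lim_le_nondecreasing (F dF f : R -> R) (l b : R) :
  (forall x, 0 < x < b -> is_derive F x (dF x)) -> (forall x, 0 < x < b -> 0 <= dF x) ->
  filterlim f (at_right 0) (locally l) -> (forall s, 0 < s < b -> f s <= F s) ->
  forall r, 0 < r < b -> l <= F r.
Proof.
  intros HD Hpos Hf Hle r Hr. apply (at_right_lim_le f l (F r) r); [lra|exact Hf|].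
  intros s Hs. apply Rle_trans with (F s); [apply Hle; lra|].
  apply (is_derive_nonneg_le F dF); [lra|intros; apply HD; lra|intros; apply Hpos; lra].
Qed.

Lemma rpow_nonneg (x a : R) : 0 <= rpow x a.
Proof.
  unfold rpow. destruct (Rle_dec x 0); [lra|]. left; apply exp_pos.
Qed.

Lemma rpow_ge_self (x a : R) : 1 <= x -> 1 < a -> x <= rpow x a.
Proof.
  intros Hx Ha. unfold rpow. destruct (Rle_dec x 0); [lra|].
  rewrite <- (Rpower_1 x) at 1 by lra. apply Rle_Rpower; lra.
Qed.

Fixpoint radial_const (m k : nat) : R :=
  match k with
  | O => 1
  | S k => radial_const m k / (INR (2 * k + 1 + m) * INR (2 * k + 2))
  end.

Lemma radial_const_pos (m k : nat) : 0 < radial_const m k.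
Proof.
  induction k as [|k IHk]; simpl; [lra|].
  apply Rdiv_lt_0_compat; [exact IHk|].
  apply Rmult_lt_0_compat; apply lt_0_INR; lia.
Qed.

Section RadialSolution.

Variables (m : nat) (lam alpha Rr : R) (phi : R -> R).
Hypotheses (lam_gt0 : 0 < lam) (alpha_gt1 : 1 < alpha).
Hypothesis phi_0 : phi 0 = 1.
Hypothesis phi_right_derive_0 :
  filterlim (fun h => (phi h - phi 0) / h) (at_right 0) (locally 0).
Hypothesis phi_derivable : forall r, 0 < r < Rr -> ex_derive phi r.

Let flux (s : R) : R := s ^ m * Derive phi s.

Hypothesis flux_derive :
  forall r, 0 < r < Rr -> is_derive flux r (r ^ m * (lam * rpow (phi r) alpha)).

Lemma phi_right_continuous : filterlim phi (at_right 0) (locally 1).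
Proof. rewrite <- phi_0. exact (filterlim_at_right_0_of_quotient phi phi_right_derive_0). Qed.

Lemma flux_derive_nonneg (r : R) : 0 < r -> 0 <= r ^ m * (lam * rpow (phi r) alpha).
Proof.
  intros Hr. apply Rmult_le_pos; [apply pow_le; lra|].
  apply Rmult_le_pos; [lra|apply rpow_nonneg].
Qed.

Lemma flux_nonneg (r : R) : 0 < r < Rr -> 0 <= flux r.
Proof.
  intros Hr. apply Rnot_lt_le; intros Hneg.
  assert (Hrm : 0 < r ^ m) by (apply pow_lt; lra).
  set (c := - flux r / r ^ m).
  assert (Hc : 0 < c) by (apply Rdiv_lt_0_compat; lra).
  assert (Hslope : forall s, 0 < s < r -> Derive phi s <= - c).
  { intros s Hs.
    assert (Hflux : flux s <= flux r).
    { apply (is_derive_nonneg_le flux (fun x => x ^ m * (lam * rpow (phi x) alpha)) s r).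
      - lra.
      - intros x Hx. apply flux_derive; lra.
      - intros x Hx. apply flux_derive_nonneg; lra. }
    assert (Hsm : 0 < s ^ m) by (apply pow_lt; lra).
    assert (Hsr : s ^ m <= r ^ m) by (apply pow_incr; lra).
    unfold flux in Hflux, Hneg. unfold c, flux. apply (Rmult_le_reg_l (r ^ m)); [lra|].
    replace (r ^ m * (- (- (r ^ m * Derive phi r) / r ^ m))) with (r ^ m * Derive phi r)
      by (field; lra).
    assert (Hds : Derive phi s < 0) by nra.
    nra. }
  (* phi (s) + c s is nonincreasing, so phi (s) <= 1 - c s, against phi'(0) = 0. *)
  assert (Hdecay : forall s, 0 < s < r -> - 1 <= - (phi s + c * s ^ 1)).
  { set (F := fun s => - (phi s + c * s ^ 1)).
    apply (at_right_lim_le_nondecreasing F (fun s => - (Derive phi s + c)) F (- 1) r).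
    - intros x Hx. unfold F. auto_derive; [apply phi_derivable; lra|].
      change (Derive (fun x => phi x)) with (Derive phi). ring.
    - intros x Hx. specialize (Hslope x Hx). lra.
    - replace (- 1) with (- (1 + 0)) by ring.
      apply (filterlim_comp _ _ _ (fun s => phi s + c * s ^ 1) Ropp _ (locally (1 + 0))).
      + apply filterlim_at_right_plus; [exact phi_right_continuous|].
        apply filterlim_at_right_0_monomial; lia.
      + exact (filterlim_opp (V := R_NormedModule) (1 + 0)).
    - intros; lra. }
  assert (Hc0 : 0 <= - c).
  { apply (at_right_lim_le (fun h => (phi h - phi 0) / h) 0 (- c) r);
      [lra|exact phi_right_derive_0|].
    intros s Hs. specialize (Hdecay s Hs). rewrite phi_0.
    apply (Rmult_le_reg_r s); [lra|]. unfold Rdiv. rewrite Rmult_assoc, Rinv_l; lra. }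
  lra.
Qed.

Lemma Derive_phi_nonneg (s : R) : 0 < s < Rr -> 0 <= Derive phi s.
Proof.
  intros Hs. assert (Hsm : 0 < s ^ m) by (apply pow_lt; lra).
  apply (Rmult_le_reg_l (s ^ m)); [exact Hsm|].
  rewrite Rmult_0_r. exact (flux_nonneg s Hs).
Qed.

Lemma phi_ge_1 (r : R) : 0 < r < Rr -> 1 <= phi r.
Proof.
  apply (at_right_lim_le_nondecreasing phi (Derive phi) phi 1 Rr).
  - intros x Hx. apply Derive_correct, phi_derivable, Hx.
  - exact Derive_phi_nonneg.
  - exact phi_right_continuous.
  - intros; lra.
Qed.

Lemma Derive_phi_pos (r : R) : 0 < r < Rr -> 0 < Derive phi r.
Proof.
  intros Hr.
  assert (Hincr : flux (r / 2) < flux r).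
  { apply (incr_function flux 0 Rr (fun x => x ^ m * (lam * rpow (phi x) alpha)));
      simpl; try lra.
    - intros x Hx0 HxR. apply flux_derive; lra.
    - intros x Hx0 HxR.
      assert (Hphi : 1 <= phi x) by (apply phi_ge_1; lra).
      assert (Hrpow : 1 <= rpow (phi x) alpha)
        by (apply Rle_trans with (phi x); [exact Hphi|apply rpow_ge_self; assumption]).
      apply Rmult_lt_0_compat; [apply pow_lt; lra|apply Rmult_lt_0_compat; lra]. }
  assert (Hhalf := flux_nonneg (r / 2) ltac:(lra)).
  assert (Hrm : 0 < r ^ m) by (apply pow_lt; lra).
  unfold flux in Hincr, Hhalf. nra.
Qed.

Lemma flux_lower_bound (c : R) (k : nat) :
  (forall s, 0 < s < Rr -> c * lam ^ k * s ^ (2 * k) <= phi s) ->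
  forall t, 0 < t < Rr -> c * lam ^ S k / INR (2 * k + 1 + m) * t ^ (2 * k + 1 + m) <= flux t.
Proof.
  intros Hphi t Ht.
  set (N := (2 * k + 1 + m)%nat).
  assert (HN : 0 < INR N) by (apply lt_0_INR; unfold N; lia).
  set (C := c * lam ^ S k / INR N).
  assert (Hge : 0 <= flux t + - C * t ^ N).
  { apply (at_right_lim_le_nondecreasing (fun s => flux s + - C * s ^ N)
      (fun s => s ^ m * (lam * rpow (phi s) alpha) + - C * INR N * s ^ pred N)
      (fun s => - C * s ^ N) 0 Rr);
      [| | |intros s Hs; pose proof (flux_nonneg s Hs); lra|exact Ht].
    - intros x Hx. apply (is_derive_plus flux (fun s => - C * s ^ N)).
      + apply flux_derive, Hx.
      + apply is_derive_monomial.
    - intros x Hx.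
      assert (Hpow : x ^ pred N = x ^ (2 * k) * x ^ m)
        by (rewrite <- pow_add; f_equal; unfold N; lia).
      assert (Hxm : 0 < x ^ m) by (apply pow_lt; lra).
      assert (Hbound : c * lam ^ k * x ^ (2 * k) <= rpow (phi x) alpha).
      { apply Rle_trans with (phi x); [apply Hphi, Hx|].
        apply rpow_ge_self; [apply phi_ge_1, Hx|exact alpha_gt1]. }
      rewrite Hpow. unfold C.
      replace (- (c * lam ^ S k / INR N) * INR N * (x ^ (2 * k) * x ^ m))
        with (- (x ^ m * (lam * (c * lam ^ k * x ^ (2 * k)))))
        by (rewrite <- tech_pow_Rmult; field; lra).
      assert (x ^ m * (lam * (c * lam ^ k * x ^ (2 * k))) <= x ^ m * (lam * rpow (phi x) alpha))
        by (apply Rmult_le_compat_l; [lra|apply Rmult_le_compat_l; lra]).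
      lra.
    - apply filterlim_at_right_0_monomial. unfold N; lia. }
  fold N C. lra.
Qed.

Lemma phi_lower_bound_of_flux (C : R) (j : nat) :
  (forall t, 0 < t < Rr -> C * t ^ (j + m) <= flux t) ->
  forall r, 0 < r < Rr -> 1 + C / INR (S j) * r ^ S j <= phi r.
Proof.
  intros Hflux r Hr.
  assert (Hj : 0 < INR (S j)) by (apply lt_0_INR; lia).
  assert (Hge : 1 + 0 <= phi r + - (C / INR (S j)) * r ^ S j).
  { apply (at_right_lim_le_nondecreasing (fun s => phi s + - (C / INR (S j)) * s ^ S j)
      (fun s => Derive phi s + - (C / INR (S j)) * INR (S j) * s ^ pred (S j))
      (fun s => phi s + - (C / INR (S j)) * s ^ S j) (1 + 0) Rr);
      [| | |intros; lra|exact Hr].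
    - intros x Hx. apply (is_derive_plus phi (fun s => - (C / INR (S j)) * s ^ S j)).
      + apply Derive_correct, phi_derivable, Hx.
      + apply is_derive_monomial.
    - intros x Hx. simpl pred.
      assert (Hxm : 0 < x ^ m) by (apply pow_lt; lra).
      assert (Hslope : C * x ^ j <= Derive phi x).
      { apply (Rmult_le_reg_l (x ^ m)); [exact Hxm|].
        rewrite <- Rmult_assoc, (Rmult_comm (x ^ m)), Rmult_assoc, <- pow_add, Nat.add_comm.
        apply Hflux, Hx. }
      replace (- (C / INR (S j)) * INR (S j) * x ^ j) with (- (C * x ^ j)) by (field; lra).
      lra.
    - apply filterlim_at_right_plus; [exact phi_right_continuous|].
      apply filterlim_at_right_0_monomial; lia. }
  lra.
Qed.

Lemma phi_lower_bound (k : nat) :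
  forall r, 0 < r < Rr -> radial_const m k * lam ^ k * r ^ (2 * k) <= phi r.
Proof.
  induction k as [|k IHk]; intros r Hr.
  - simpl. rewrite !Rmult_1_r. exact (phi_ge_1 r Hr).
  - assert (Hstep := phi_lower_bound_of_flux _ (2 * k + 1)
                       (flux_lower_bound (radial_const m k) k IHk) r Hr).
    replace (2 * S k)%nat with (S (2 * k + 1)) by lia.
    replace (radial_const m (S k) * lam ^ S k)
      with (radial_const m k * lam ^ S k / INR (2 * k + 1 + m) / INR (S (2 * k + 1))).
    + lra.
    + cbn [radial_const]. replace (S (2 * k + 1)) with (2 * k + 2)%nat by lia.
      field. split; apply not_0_INR; lia.
Qed.

End RadialSolution.

Theorem lemma4p6 (n : nat) (hn : (1 <= n)%nat) :
  (forall (lam Rr alpha : R) (phi : R -> R),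
     0 < lam -> 0 < Rr -> 1 < alpha -> radial_solution n lam alpha Rr phi ->
     forall r, 0 < r < Rr -> 0 < Derive phi r) /\
  (forall k : nat, (1 <= k)%nat ->
     exists c : R, 0 < c /\
       forall (lam Rr alpha : R) (phi : R -> R),
         0 < lam -> 0 < Rr -> 1 < alpha -> radial_solution n lam alpha Rr phi ->
         forall r, 0 < r < Rr -> c * lam ^ k * r ^ (2 * k) <= phi r).
Proof.
  split.
  - intros lam Rr alpha phi Hlam _ Halpha [_ [H0 [Hq [Hd Hflux]]]].
    exact (Derive_phi_pos (n - 1) lam alpha Rr phi Hlam Halpha H0 Hq Hd Hflux).
  - intros k _. exists (radial_const (n - 1) k). split; [apply radial_const_pos|].
    intros lam Rr alpha phi Hlam _ Halpha [_ [H0 [Hq [Hd Hflux]]]].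
    exact (phi_lower_bound (n - 1) lam alpha Rr phi Hlam Halpha H0 Hq Hd Hflux k).
Qed.
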